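(* Consider the least-squares approximate policy iteration sequence described in the context, and suppose $m+H-1>\log(\delta_{FV})/\log(1/\alpha)$ (with $\delta_{FV}<\infty$). Define $$\tau:=\frac{\alpha^m+\alpha^{m+H-1}}{1-\alpha}\delta_{FV}+\delta_{app}+\delta_{FV}\epsilon_{PE},\qquad \beta:=\alpha^{m+H-1}\delta_{FV}.$$ Then for every $k\ge1$, $$\|J^{\mu_k}-J^*\|_\infty \le \frac{\alpha^{kH}}{1-\alpha}+\frac{2\alpha^H\|J^{\mu_0}-J_0\|_\infty}{1-\alpha}\,k\,\max(\alpha^H,\beta)^{k-1} + \frac{2\alpha^H\frac{\tau}{1-\beta}+\epsilon_{LA}}{(1-\alpha^H)(1-\alpha)}.$$
   Context: Consider a Markov decision process with finite state space $S$, finite action space $A$, transition probabilities $P_{ij}(a)$, rewards $r(s,a)\in[0,1]$, and discount factor $\alpha\in(0,1)$. A (deterministic stationary) policy is a map $\mu:S\to A$; its value is $J^\mu(s)=E[\sum_{t\ge0}\alpha^t r(s_t,\mu(s_t))\mid s_0=s]$, and $J^*(s)=\max_\mu J^\mu(s)$. For a policy $\mu$, $(T_\mu J)(s)=r(s,\mu(s))+\alpha\sum_j P_{sj}(\mu(s))J(j)$; the Bellman operator is $(TJ)(s)=\max_{a\in A}\{r(s,a)+\alpha\sum_j P_{sj}(a)J(j)\}$; powers denote repeated application. $\|\cdot\|_\infty$ denotes the max norm and the induced matrix norm. Least-squares approximate policy iteration: fix integers $m\ge1$, $H\ge1$, constants $\epsilon_{LA},\epsilon_{PE}\ge0$, a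 feature matrix $\Phi\in\mathbb{R}^{|S|\times d}$ whose row $i$ is $\phi(i)^\top$, and subsets $D_k\subseteq S$ ($k\ge0$) such that $\{\phi(i)\}_{i\in D_k}$ has rank $d$. Let $\Phi_{D_k}$ be the submatrix of $\Phi$ with rows indexed by $D_k$, $P_k\in\{0,1\}^{|D_k|\times|S|}$ the matrix selecting the coordinates in $D_k$, and $\mathcal{M}_{k+1}:=\Phi(\Phi_{D_k}^\top\Phi_{D_k})^{-1}\Phi_{D_k}^\top P_k$ for $k\ge0$. Start with arbitrary $J_0\in\mathbb{R}^{|S|}$ and an arbitrary policy $\mu_0$. For each $k\ge0$: $\mu_{k+1}$ is any policy with $\|T^HJ_k-T_{\mu_{k+1}}T^{H-1}J_k\|_\infty\le\epsilon_{LA}$; $w_{k+1}\in\mathbb{R}^{|S|}$ is a noise vector with $w_{k+1}(i)=0$ for $i\notin D_k$ and $\|w_{k+1}\|_\infty\le\epsilon_{PE}$; and $J_{k+1}=\mathcal{M}_{k+1}(T^m_{\mu_{k+1}}T^{H-1}J_k+w_{k+1})$ (equivalently $J_{k+1}=\Phi\theta_{k+1}$ where $\theta_{k+1}$ minimizes $\sum_{i\in D_k}((\Phi\theta)(i)-\hat J_{k+1}(i))^2$ with $\hat J_{k+1}=T^m_{\mu_{k+1}}T^{H-1}J_k+w_{k+1}$). Define $\delta_{FV}:=\sup_{k\ge1}\|\mathcal{M}_k\|_\infty$ and $\delta_{app}:=\sup_{k\ge1}\sup_{\mu}\|\mathcal{M}_kJ^\mu-J^\mu\|_\infty$, the inner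 supremum over all policies. *)

From HB Require Import structures.
From mathcomp Require Import all_boot all_order all_algebra.
From mathcomp Require Import all_classical all_reals all_analysis.
Set Implicit Arguments. Unset Strict Implicit. Unset Printing Implicit Defensive.
Import Order.TTheory GRing.Theory Num.Theory.
Local Open Scope ring_scope.
Local Open Scope classical_set_scope.

Section MDP.
Variables (R : realType) (n : nat) (A : finType).
(* states are 'I_n; P s a j = P_{sj}(a); r s a = r(s,a) *)
Variables (P : 'I_n -> A -> 'I_n -> R) (r : 'I_n -> A -> R) (alpha : R).

Definition vec := 'I_n -> R.

Definition vnorm (v : vec) : R := \big[Num.max/0]_(i < n) `|v i|.

Definition mxnorm (M : 'M[R]_n) : R :=
  \big[Num.max/0]_(i < n) \sum_(j < n) `|M i j|.

Definition mxapp (M : 'M[R]_n) (v : vec) : vec :=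
  fun i => (M *m \col_j v j) i ord0.

Definition Pmu (mu : 'I_n -> A) : 'M[R]_n := \matrix_(i, j) P i (mu i) j.
Definition rmu (mu : 'I_n -> A) : vec := fun i => r i (mu i).

(* J^mu(s) = E[ sum_t alpha^t r(s_t, mu(s_t)) | s_0 = s ]
          = sum_{t>=0} alpha^t (P_mu^t r_mu)(s) *)
Definition Jmu (mu : 'I_n -> A) : vec :=
  fun s => limn (fun N : nat =>
    \sum_(t < N) alpha ^+ t * mxapp (Pmu mu ^+ t) (rmu mu) s).

(* J^*(s) = max over (deterministic stationary) policies; the seed mud is
   itself a policy, so this is exactly the maximum *)
Definition Jstar (mud : {ffun 'I_n -> A}) : vec :=
  fun s => \big[Num.max/Jmu mud s]_(mu : {ffun 'I_n -> A}) Jmu mu s.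

Definition Tmu (mu : 'I_n -> A) (J : vec) : vec :=
  fun s => r s (mu s) + alpha * \sum_(j < n) P s (mu s) j * J j.

(* Bellman operator; the seed a0 is one of the actions, so this is exactly
   the maximum over A *)
Definition Tbell (a0 : A) (J : vec) : vec :=
  fun s => \big[Num.max/(r s a0 + alpha * \sum_(j < n) P s a0 j * J j)]_(a : A)
             (r s a + alpha * \sum_(j < n) P s a j * J j).

Definition vsub (u v : vec) : vec := fun i => u i - v i.
Definition vadd (u v : vec) : vec := fun i => u i + v i.

Variable d : nat.
(* P_k : selection matrix of the coordinates in D *)
Definition selmx (D : {set 'I_n}) : 'M[R]_(#|D|, n) :=
  \matrix_(i, j) (enum_val i == j)%:R.
Definition PhiD (Phi : 'M[R]_(n, d)) (D : {set 'I_n}) : 'M[R]_(#|D|, d) :=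
  selmx D *m Phi.
Definition LSproj (Phi : 'M[R]_(n, d)) (D : {set 'I_n}) : 'M[R]_n :=
  Phi *m invmx ((PhiD Phi D)^T *m PhiD Phi D) *m (PhiD Phi D)^T *m selmx D.

End MDP.

Section Deltas.
Variables (R : realType) (n : nat) (A : finType) (d : nat).
Variables (P : 'I_n -> A -> 'I_n -> R) (r : 'I_n -> A -> R) (alpha : R).
Variables (Phi : 'M[R]_(n, d)) (D : nat -> {set 'I_n}).
Local Open Scope classical_set_scope.

(* M_k for k >= 1 : M_{k+1} built from D_k *)
Definition Mk (k : nat) : 'M[R]_n := LSproj Phi (D k.-1).

Definition deltaFV_set : set R :=
  [set x | exists k : nat, (1 <= k)%N /\ x = mxnorm (Mk k)].
Definition deltaFV : R := sup deltaFV_set.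

Definition deltaapp_set : set R :=
  [set x | exists (k : nat) (mu : 'I_n -> A), (1 <= k)%N /\
     x = vnorm (vsub (mxapp (Mk k) (Jmu P r alpha mu)) (Jmu P r alpha mu))].
Definition deltaapp : R := sup deltaapp_set.
End Deltas.

From HB Require Import structures.
From mathcomp Require Import all_boot all_order all_algebra.
From mathcomp Require Import all_classical all_reals all_analysis.
From mathcomp Require Import ring lra.
Import Order.TTheory GRing.Theory Num.Theory.
Import numFieldNormedType.Exports.
Set Implicit Arguments. Unset Strict Implicit. Unset Printing Implicit Defensive.
Local Open Scope ring_scope.
Local Open Scope classical_set_scope.

(* Two errors are tracked along the iteration: the evaluation error
   [e_k = |J^mu_k - J_k|] and the policy error [a_k = |J^mu_k - J^*|].  All
   Bellman operators are monotone [alpha]-contractions, so the [H]-step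
   lookahead policy satisfies
     [a_(k+1) <= alpha^H a_k + (2 alpha^H e_k + eps_LA) / (1 - alpha)]:
   its value dominates [T^H J^mu_k] up to the second term, while
   [J^* <= T^H J^mu_k + alpha^H a_k].  The least-squares step enlarges errors
   by at most [delta_FV], whereas the [m + H - 1] contractions preceding it
   shrink them by [alpha^(m+H-1)]; hence [e_(k+1) <= beta e_k + tau], with
   [beta < 1] by the horizon condition.  Unrolling the two coupled linear
   recurrences gives the bound; the factor [k] comes from the possible
   resonance of the rates [alpha^H] and [beta]. *)

Section VectorNorm.
Variables (R : realType) (n : nat).
Implicit Types (u v : 'I_n -> R) (M : 'M[R]_n).

Lemma vnorm_ge0 v : 0 <= vnorm v.
Proof. exact: bigmax_ge_id. Qed.

Lemma ler_vnorm v i : `|v i| <= vnorm v.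
Proof. exact: (le_bigmax _ (fun i => `|v i|)). Qed.

Lemma vnorm_le v c : 0 <= c -> (forall i, `|v i| <= c) -> vnorm v <= c.
Proof. by move=> c0 hv; apply: bigmax_le => // i _; apply: hv. Qed.

Lemma vnorm_subP u v c i :
  vnorm (vsub u v) <= c -> u i <= v i + c /\ v i <= u i + c.
Proof.
move/(le_trans (ler_vnorm (vsub u v) i)); rewrite ler_norml /vsub.
by case/andP=> h1 h2; split; lra.
Qed.

Lemma vnorm_sub_le u v c : 0 <= c ->
  (forall i, u i <= v i + c) -> (forall i, v i <= u i + c) -> vnorm (vsub u v) <= c.
Proof.
move=> c0 huv hvu; apply: vnorm_le => // i.
by rewrite ler_norml /vsub; have := huv i; have := hvu i; move=> *; apply/andP; split; lra.
Qed.

Lemma vnorm_subC u v : vnorm (vsub u v) = vnorm (vsub v u).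
Proof. by apply: eq_bigr => i _; rewrite /vsub distrC. Qed.

Lemma vnorm_sub_triangle u v w :
  vnorm (vsub u w) <= vnorm (vsub u v) + vnorm (vsub v w).
Proof.
apply: vnorm_le => [|i]; first by rewrite addr_ge0 // vnorm_ge0.
by rewrite /vsub (le_trans (ler_distD (v i) _ _)) // lerD // (ler_vnorm (vsub _ _)).
Qed.

Lemma vnorm_sub_range u v c : 0 <= c ->
  (forall i, 0 <= u i <= c) -> (forall i, 0 <= v i <= c) -> vnorm (vsub u v) <= c.
Proof.
move=> c0 hu hv; apply: vnorm_sub_le => // i.
  by case/andP: (hu i) => _ ?; case/andP: (hv i) => ? _; lra.
by case/andP: (hv i) => _ ?; case/andP: (hu i) => ? _; lra.
Qed.

Lemma mxappE M v i : mxapp M v i = \sum_j M i j * v j.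
Proof. by rewrite /mxapp !mxE; apply: eq_bigr => j _; rewrite mxE. Qed.

Lemma mxnorm_ge0 M : 0 <= mxnorm M.
Proof. exact: bigmax_ge_id. Qed.

Lemma ler_mxapp M v i : `|mxapp M v i| <= mxnorm M * vnorm v.
Proof.
rewrite mxappE; apply: le_trans (ler_norm_sum _ _ _) _.
apply: le_trans (_ : \sum_j `|M i j| * vnorm v <= _).
  by apply: ler_sum => j _; rewrite normrM ler_wpM2l // ler_vnorm.
rewrite -mulr_suml ler_wpM2r ?vnorm_ge0 //.
exact: (le_bigmax _ (fun i => \sum_j `|M i j|)).
Qed.

Lemma mxapp_vadd_vsub M u v w i :
  mxapp M (vadd u w) i = mxapp M (vsub u v) i + mxapp M v i + mxapp M w i.
Proof.
by rewrite !mxappE -!big_split; apply: eq_bigr => j _; rewrite /vadd /vsub /=; ring.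
Qed.

End VectorNorm.

Section Bellman.
Variables (R : realType) (n : nat) (A : finType).
Variables (P : 'I_n -> A -> 'I_n -> R) (r : 'I_n -> A -> R) (alpha : R).
Hypothesis P_ge0 : forall s a j, 0 <= P s a j.
Hypothesis P_sum1 : forall s a, \sum_(j < n) P s a j = 1.
Hypothesis r_range : forall s a, 0 <= r s a <= 1.
Hypothesis alpha_range : 0 < alpha < 1.

Let alpha_ge0 : 0 <= alpha. Proof. by case/andP: alpha_range => /ltW. Qed.
Let onemalpha_gt0 : 0 < 1 - alpha. Proof. by case/andP: alpha_range; rewrite subr_gt0. Qed.

Local Notation K := (1 - alpha)^-1.

Let K_ge0 : 0 <= K. Proof. by rewrite invr_ge0 ltW. Qed.
Let K_fix : 1 + alpha * K = K. Proof. by field; rewrite lt0r_neq0. Qed.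

Definition qvalue a (V : 'I_n -> R) s := r s a + alpha * \sum_(j < n) P s a j * V j.

(* Monotonicity and sup-norm [alpha]-contraction in a single condition. *)
Definition shift_contractive (F : ('I_n -> R) -> 'I_n -> R) :=
  forall V W c, (forall i, V i <= W i + c) -> forall s, F V s <= F W s + alpha * c.

Lemma qvalue_shift a V W c : (forall i, V i <= W i + c) ->
  forall s, qvalue a V s <= qvalue a W s + alpha * c.
Proof.
move=> h s; rewrite /qvalue -addrA lerD2l -mulrDr ler_wpM2l //.
apply: le_trans (_ : \sum_j P s a j * (W j + c) <= _).
  by apply: ler_sum => j _; apply: ler_wpM2l.
by under eq_bigr => j _ do rewrite mulrDr; rewrite big_split /= -mulr_suml P_sum1 mul1r.
Qed.

Lemma Tmu_shift_contractive nu : shift_contractive (Tmu P r alpha nu).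
Proof. by move=> V W c h s; apply: (qvalue_shift (nu s) h). Qed.

Lemma qvalue_le_Tbell a0 a V s : qvalue a V s <= Tbell P r alpha a0 V s.
Proof. exact: (le_bigmax _ (fun a => qvalue a V s)). Qed.

Lemma Tmu_le_Tbell a0 nu V s : Tmu P r alpha nu V s <= Tbell P r alpha a0 V s.
Proof. exact: qvalue_le_Tbell. Qed.

Lemma Tbell_shift_contractive a0 : shift_contractive (Tbell P r alpha a0).
Proof.
move=> V W c h s; apply: bigmax_le => [|a _];
  by apply: le_trans (qvalue_shift _ h s) _; rewrite lerD2r qvalue_le_Tbell.
Qed.

Section ShiftContractive.
Variable F : ('I_n -> R) -> 'I_n -> R.
Hypothesis F_shift : shift_contractive F.

Lemma iter_shift k V W c : (forall i, V i <= W i + c) ->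
  forall s, iter k F V s <= iter k F W s + alpha ^+ k * c.
Proof.
elim: k => [|k IH] h s /=; first by rewrite expr0 mul1r.
by rewrite exprS -mulrA; apply: F_shift (IH h) s.
Qed.

Lemma iter_mono k V W : (forall i, V i <= W i) ->
  forall s, iter k F V s <= iter k F W s.
Proof.
move=> h s; have h0 : forall i, V i <= W i + 0 by move=> i; rewrite addr0.
by have := iter_shift k h0 s; rewrite mulr0 addr0.
Qed.

Lemma vnorm_iter_sub k V W :
  vnorm (vsub (iter k F V) (iter k F W)) <= alpha ^+ k * vnorm (vsub V W).
Proof.
apply: vnorm_sub_le => [|s|s]; first by rewrite mulr_ge0 ?exprn_ge0 ?vnorm_ge0.
  by apply: iter_shift => i; case: (vnorm_subP i (lexx (vnorm (vsub V W)))).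
by apply: iter_shift => i; case: (vnorm_subP i (lexx (vnorm (vsub V W)))).
Qed.

End ShiftContractive.

Lemma iter_Tmu_le_iter_Tbell a0 nu k V s :
  iter k (Tmu P r alpha nu) V s <= iter k (Tbell P r alpha a0) V s.
Proof.
elim: k s => [|k IH] s //=; apply: le_trans (Tmu_le_Tbell a0 nu _ s).
by apply: (iter_mono (Tmu_shift_contractive nu) 1).
Qed.

Lemma qvalue_range a V s : (forall j, 0 <= V j <= K) -> 0 <= qvalue a V s <= K.
Proof.
move=> hV; have [r0 r1] := andP (r_range s a); apply/andP; split.
  by rewrite addr_ge0 // mulr_ge0 // sumr_ge0 // => j _; case/andP: (hV j) => *; rewrite mulr_ge0.
rewrite -K_fix lerD // ler_wpM2l //.
apply: le_trans (_ : \sum_j P s a j * K <= _); last by rewrite -mulr_suml P_sum1 mul1r.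
by apply: ler_sum => j _; case/andP: (hV j) => *; rewrite ler_wpM2l.
Qed.

Lemma Tbell_range a0 V s : (forall j, 0 <= V j <= K) -> 0 <= Tbell P r alpha a0 V s <= K.
Proof.
move=> hV; have [q0 q1] := andP (qvalue_range a0 s hV); apply/andP; split.
  exact: le_trans q0 (qvalue_le_Tbell a0 a0 V s).
by apply: bigmax_le => // a _; case/andP: (qvalue_range a s hV).
Qed.

Lemma iter_Tbell_range a0 k V : (forall j, 0 <= V j <= K) ->
  forall s, 0 <= iter k (Tbell P r alpha a0) V s <= K.
Proof. by move=> hV; elim: k => [|k IH] s //=; apply: Tbell_range. Qed.

Definition expected_reward nu t := mxapp (Pmu P nu ^+ t) (rmu r nu).

Definition partial_value nu N i := \sum_(t < N) alpha ^+ t * expected_reward nu t i.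

Lemma expected_reward0 nu i : expected_reward nu 0 i = r i (nu i).
Proof.
rewrite /expected_reward mxappE expr0 (bigD1 i) //= big1 ?addr0; first by rewrite mxE eqxx mul1r.
by move=> j /negbTE ji; rewrite mxE eq_sym ji mul0r.
Qed.

Lemma expected_rewardS nu t i :
  expected_reward nu t.+1 i = \sum_j P i (nu i) j * expected_reward nu t j.
Proof.
rewrite /expected_reward mxappE exprS.
under eq_bigr => k _ do rewrite -mulmxE mxE mulr_suml.
rewrite exchange_big /=; apply: eq_bigr => j _.
rewrite mxappE mulr_sumr; apply: eq_bigr => k _.
by rewrite mxE mulrA.
Qed.

Lemma partial_valueS nu N i :
  partial_value nu N.+1 i = Tmu P r alpha nu (partial_value nu N) i.
Proof.
rewrite /partial_value big_ord_recl expr0 mul1r expected_reward0; congr (_ + _).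
under eq_bigr => t _ do rewrite expected_rewardS /bump /= exprS mulr_sumr.
rewrite exchange_big mulr_sumr /=; apply: eq_bigr => j _.
by rewrite !mulr_sumr; apply: eq_bigr => t _; ring.
Qed.

Lemma partial_value_range nu N i : 0 <= partial_value nu N i <= K.
Proof.
elim: N i => [|N IH] i; first by rewrite /partial_value big_ord0 lexx.
by rewrite partial_valueS; apply: qvalue_range.
Qed.

Lemma partial_value_nondecreasing nu i :
  {homo (partial_value nu ^~ i) : N M / (N <= M)%N >-> N <= M}.
Proof.
apply/nondecreasing_seqP => N; elim: N i => [|N IH] i.
  by rewrite /partial_value big_ord0; case/andP: (partial_value_range nu 1 i).
rewrite partial_valueS [X in _ <= X]partial_valueS.
exact: (iter_mono (Tmu_shift_contractive nu) 1).
Qed.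

Lemma partial_value_cvg nu i :
  partial_value nu N i @[N --> \oo] --> Jmu P r alpha nu i.
Proof.
have ub : has_ubound (range (partial_value nu ^~ i)).
  by exists K => _ [N _ <-]; case/andP: (partial_value_range nu N i).
have c := nondecreasing_cvgn (partial_value_nondecreasing nu i) ub.
by rewrite /Jmu -/(partial_value nu _ i) (cvg_lim _ c).
Qed.

Lemma Jmu_range nu i : 0 <= Jmu P r alpha nu i <= K.
Proof.
have c := @partial_value_cvg nu i; rewrite -(cvg_lim _ c) //.
by apply/andP; split; [apply: limr_ge | apply: limr_le] => //;
  apply: nearW => N; case/andP: (partial_value_range nu N i).
Qed.

Lemma Tmu_Jmu nu : Tmu P r alpha nu (Jmu P r alpha nu) = Jmu P r alpha nu.
Proof.
apply: funext => i.
have c : Tmu P r alpha nu (partial_value nu N) i @[N --> \oo] --> Jmu P r alpha nu i.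
  under eq_cvg do rewrite -partial_valueS.
  by move: (@partial_value_cvg nu i); rewrite -cvg_shiftS.
suff c' : Tmu P r alpha nu (partial_value nu N) i @[N --> \oo] -->
          Tmu P r alpha nu (Jmu P r alpha nu) i by exact: cvg_unique c' c.
apply: cvgD; first exact: cvg_cst.
apply: cvgMl_tmp; apply: cvg_big => [|j _]; first exact: add_continuous.
by apply: cvgMl_tmp; apply: partial_value_cvg.
Qed.

Lemma iter_Tmu_Jmu nu k : iter k (Tmu P r alpha nu) (Jmu P r alpha nu) = Jmu P r alpha nu.
Proof. by elim: k => [|k IH] //=; rewrite IH Tmu_Jmu. Qed.


Lemma Jmu_le_Jstar (mud : {ffun 'I_n -> A}) (nu : 'I_n -> A) s :
  Jmu P r alpha nu s <= Jstar P r alpha mud s.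
Proof.
have -> : nu = [ffun i => nu i] :> ('I_n -> A) by apply: funext => i; rewrite ffunE.
exact: (le_bigmax _ (fun mu : {ffun 'I_n -> A} => Jmu P r alpha mu s)).
Qed.

Lemma Jstar_le (mud : {ffun 'I_n -> A}) s x :
  (forall nu : {ffun 'I_n -> A}, Jmu P r alpha nu s <= x) -> Jstar P r alpha mud s <= x.
Proof. by move=> h; apply: bigmax_le. Qed.

Lemma Jstar_range (mud : {ffun 'I_n -> A}) s : 0 <= Jstar P r alpha mud s <= K.
Proof.
apply/andP; split; last by apply: Jstar_le => nu; case/andP: (Jmu_range nu s).
by case/andP: (Jmu_range mud s) => Jmu_ge0 _; apply: le_trans Jmu_ge0 (Jmu_le_Jstar mud mud s).
Qed.

Lemma Jstar_le_iter_Tbell a0 (mud : {ffun 'I_n -> A}) V c k :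
  (forall i, Jstar P r alpha mud i <= V i + c) ->
  forall s, Jstar P r alpha mud s <= iter k (Tbell P r alpha a0) V s + alpha ^+ k * c.
Proof.
move=> hV s; apply: Jstar_le => nu; rewrite -(iter_Tmu_Jmu nu k).
have hnu i : Jmu P r alpha nu i <= V i + c := le_trans (Jmu_le_Jstar mud nu i) (hV i).
apply: le_trans (iter_shift (Tmu_shift_contractive nu) k hnu s) _.
by rewrite lerD2r iter_Tmu_le_iter_Tbell.
Qed.

Lemma Jmu_ge_of_le_Tmu nu V dl : 0 <= dl ->
  (forall i, V i <= Tmu P r alpha nu V i + dl) -> forall i, V i <= Jmu P r alpha nu i + dl * K.
Proof.
move=> dl0 hV; set J := Jmu P r alpha nu.
(* The largest excess [M] of [V] over the fixed point [J] satisfies [M <= dl + alpha M]. *)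
pose M := \big[Num.max/0]_(i < n) (V i - J i).
have M_ge i : V i - J i <= M by exact: (le_bigmax _ (fun i => V i - J i)).
have hVJ i : V i <= J i + M by rewrite -lerBlDl.
have M_le : M <= dl + alpha * M.
  apply: bigmax_le => [|i _]; first by rewrite addr_ge0 // mulr_ge0 // bigmax_ge_id.
  have := hV i; have := Tmu_shift_contractive nu hVJ i; rewrite /J Tmu_Jmu; lra.
have : M <= dl * K by rewrite ler_pdivlMr //; lra.
by move=> h i; have := M_ge i; lra.
Qed.

Section Lookahead.
Variables (a0 : A) (H : nat) (J0 : 'I_n -> R) (mu mu' : 'I_n -> A).
Hypothesis H_ge1 : (1 <= H)%N.
Local Notation T := (Tbell P r alpha a0).
Local Notation e := (vnorm (vsub (Jmu P r alpha mu) J0)).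

Lemma iter_Tbell_Jmu_le_lookahead eps :
  vnorm (vsub (iter H T J0) (Tmu P r alpha mu' (iter H.-1 T J0))) <= eps ->
  forall s, iter H T (Jmu P r alpha mu) s <=
            Jmu P r alpha mu' s + (2 * alpha ^+ H * e + eps) * K.
Proof.
move=> heps; set Jm := Jmu P r alpha mu; set V := iter H.-1 T Jm.
set dl := 2 * alpha ^+ H * e + eps.
have eps_ge0 : 0 <= eps := le_trans (vnorm_ge0 _) heps.
have dl_ge0 : 0 <= dl by rewrite addr_ge0 // !mulr_ge0 ?exprn_ge0 ?vnorm_ge0.
have eH : alpha ^+ H = alpha * alpha ^+ H.-1 by rewrite -exprS prednK.
have TH_le s : iter H T Jm s <= Tmu P r alpha mu' V s + dl.
  have h1 := iter_shift (Tbell_shift_contractive a0) H (fun i => proj1 (vnorm_subP i (lexx e))) s.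
  have [h2 _] := vnorm_subP s heps.
  have h3 := iter_shift (Tbell_shift_contractive a0) H.-1 (fun i => proj2 (vnorm_subP i (lexx e))).
  have h4 := Tmu_shift_contractive mu' h3 s.
  by rewrite -/V mulrA -eH in h4; rewrite /dl; lra.
have V_le s : V s <= iter H T Jm s.
  rewrite -(prednK H_ge1) iterSr; apply: (iter_mono (Tbell_shift_contractive a0)) => i.
  by apply: (le_trans _ (Tmu_le_Tbell a0 mu Jm i)); rewrite /Jm Tmu_Jmu.
have V_le_Jmu' := Jmu_ge_of_le_Tmu dl_ge0 (fun i => le_trans (V_le i) (TH_le i)).
move=> s; have := Tmu_shift_contractive mu' V_le_Jmu' s; rewrite Tmu_Jmu.
have := TH_le s; have : dl * K = dl + alpha * (dl * K) by rewrite -{1}K_fix; ring.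
lra.
Qed.

Lemma lookahead_policy_error (mud : {ffun 'I_n -> A}) eps :
  vnorm (vsub (iter H T J0) (Tmu P r alpha mu' (iter H.-1 T J0))) <= eps ->
  vnorm (vsub (Jmu P r alpha mu') (Jstar P r alpha mud)) <=
    alpha ^+ H * vnorm (vsub (Jmu P r alpha mu) (Jstar P r alpha mud))
    + (2 * alpha ^+ H * e + eps) * K.
Proof.
move=> heps; set a := vnorm (vsub (Jmu P r alpha mu) (Jstar P r alpha mud)).
have eps_ge0 : 0 <= eps := le_trans (vnorm_ge0 _) heps.
have Jstar_bound s := Jstar_le_iter_Tbell a0 H (fun i => proj2 (vnorm_subP i (lexx a))) s.
have lookahead := iter_Tbell_Jmu_le_lookahead heps.
have bound_ge0 : 0 <= alpha ^+ H * a + (2 * alpha ^+ H * e + eps) * K.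
  by rewrite ?(addr_ge0, mulr_ge0, exprn_ge0, vnorm_ge0).
apply: vnorm_sub_le => // s.
- by have := Jmu_le_Jstar mud mu' s; lra.
- by have := Jstar_bound s; have := lookahead s; lra.
Qed.

End Lookahead.

Lemma projected_evaluation_error a0 m H J0 (mu mu' : 'I_n -> A) (M : 'M[R]_n) w
    dFV epsPE dapp :
  mxnorm M <= dFV -> vnorm w <= epsPE ->
  vnorm (vsub (mxapp M (Jmu P r alpha mu')) (Jmu P r alpha mu')) <= dapp ->
  vnorm (vsub (Jmu P r alpha mu')
     (mxapp M (vadd (iter m (Tmu P r alpha mu') (iter H.-1 (Tbell P r alpha a0) J0)) w)))
  <= alpha ^+ (m + H.-1) * dFV * vnorm (vsub (Jmu P r alpha mu) J0)
     + (alpha ^+ m * K * dFV + dapp + dFV * epsPE).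
Proof.
move=> hM hw happ; set T := Tbell P r alpha a0; set Y := Jmu P r alpha mu'.
set e := vnorm (vsub (Jmu P r alpha mu) J0).
set X := iter m (Tmu P r alpha mu') (iter H.-1 T J0).
have dFV_ge0 : 0 <= dFV := le_trans (mxnorm_ge0 _) hM.
have hV0 : vnorm (vsub (iter H.-1 T J0) Y) <= alpha ^+ H.-1 * e + K.
  apply: le_trans (vnorm_sub_triangle _ (iter H.-1 T (Jmu P r alpha mu)) _) _.
  apply: lerD; first by apply: le_trans (vnorm_iter_sub (Tbell_shift_contractive a0) _ _ _) _;
    rewrite vnorm_subC.
  by apply: vnorm_sub_range => // i; [apply: iter_Tbell_range => j|]; apply: Jmu_range.
have hXY : vnorm (vsub X Y) <= alpha ^+ m * (alpha ^+ H.-1 * e + K).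
  rewrite /X /Y -(iter_Tmu_Jmu mu' m).
  apply: le_trans (vnorm_iter_sub (Tmu_shift_contractive mu') _ _ _) _.
  by rewrite ler_wpM2l ?exprn_ge0.
apply: vnorm_le => [|i]; first by rewrite !addr_ge0 // ?vnorm_ge0 ?(le_trans (vnorm_ge0 _) happ)
  // ?(mulr_ge0 dFV_ge0) ?(le_trans (vnorm_ge0 _) hw) // !mulr_ge0 ?exprn_ge0 ?vnorm_ge0.
rewrite /vsub (mxapp_vadd_vsub M X Y w i).
have t1 := le_trans (ler_mxapp M (vsub X Y) i) (ler_pM (mxnorm_ge0 _) (vnorm_ge0 _) hM hXY).
have t2 := le_trans (ler_vnorm (vsub (mxapp M Y) Y) i) happ.
have t3 := le_trans (ler_mxapp M w i) (ler_pM (mxnorm_ge0 _) (vnorm_ge0 _) hM hw).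
have -> : alpha ^+ (m + H.-1) * dFV * e + (alpha ^+ m * K * dFV + dapp + dFV * epsPE)
  = dFV * (alpha ^+ m * (alpha ^+ H.-1 * e + K)) + dapp + dFV * epsPE by rewrite exprD; ring.
move: t1 t2 t3; rewrite /vsub !ler_norml => /andP[? ?] /andP[? ?] /andP[? ?].
by apply/andP; split; lra.
Qed.

Variables (d : nat) (Phi : 'M[R]_(n, d)) (D : nat -> {set 'I_n}).
Hypothesis deltaFV_bounded : has_ubound (deltaFV_set Phi D).

Lemma mxnorm_LSproj_le_deltaFV k : mxnorm (LSproj Phi (D k)) <= deltaFV Phi D.
Proof. by apply: (ub_le_sup deltaFV_bounded); exists k.+1. Qed.

Lemma LSproj_Jmu_error_le_deltaapp k nu :
  vnorm (vsub (mxapp (LSproj Phi (D k)) (Jmu P r alpha nu)) (Jmu P r alpha nu))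
  <= deltaapp P r alpha Phi D.
Proof.
suff app_bounded : has_ubound (deltaapp_set P r alpha Phi D).
  by apply: (ub_le_sup app_bounded); exists k.+1, nu.
exists (deltaFV Phi D * K + K) => _ [j [nu' [_ ->]]].
have hM := mxnorm_LSproj_le_deltaFV j.-1.
have Jmu_norm : vnorm (Jmu P r alpha nu') <= K.
  by apply: vnorm_le => // i; case/andP: (Jmu_range nu' i) => *; rewrite ger0_norm.
apply: le_trans (vnorm_sub_triangle _ (fun=> 0) _) _; apply: lerD.
  apply: vnorm_le => [|i]; first by rewrite mulr_ge0 // (le_trans (mxnorm_ge0 _) hM).
  rewrite /vsub subr0; apply: le_trans (ler_mxapp _ _ i) _.
  by rewrite ler_pM ?mxnorm_ge0 ?vnorm_ge0.
apply: vnorm_le => // i; rewrite /vsub sub0r normrN.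
exact: le_trans (ler_vnorm _ i) Jmu_norm.
Qed.

End Bellman.

Lemma affine_recurrence_le (R : realFieldType) (b tau : R) (e : nat -> R) :
  0 <= b < 1 -> 0 <= tau -> (forall k, e k.+1 <= b * e k + tau) ->
  forall k, e k <= b ^+ k * e 0%N + tau / (1 - b).
Proof.
move=> /andP[b_ge0 b_lt1] tau_ge0 e_step.
have fix_tau : b * (tau / (1 - b)) + tau = tau / (1 - b).
  by field; rewrite subr_eq0 gt_eqF.
have tp_ge0 : 0 <= tau / (1 - b) by rewrite divr_ge0 // subr_ge0 ltW.
elim=> [|k IH]; first by rewrite expr0 mul1r lerDl.
apply: le_trans (e_step k) _; have := ler_wpM2l b_ge0 IH; rewrite exprS; lra.
Qed.

Lemma perturbed_recurrence_le (R : realFieldType) (al x b e0 tp eps : R) (a e : nat -> R) :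
  al < 1 -> 0 <= x < 1 -> 0 <= b -> 0 <= e0 -> 0 <= tp -> 0 <= eps ->
  (forall k, e k <= b ^+ k * e0 + tp) -> a 0%N <= (1 - al)^-1 ->
  (forall k, a k.+1 <= x * a k + (2 * x * e k + eps) / (1 - al)) ->
  forall k, a k <= x ^+ k / (1 - al) + 2 * x * e0 / (1 - al) * k%:R * (Num.max x b) ^+ k.-1
     + (2 * x * tp + eps) / ((1 - x) * (1 - al)).
Proof.
move=> al_lt1 /andP[x_ge0 x_lt1] b_ge0 e0_ge0 tp_ge0 eps_ge0 e_le a0_le a_step.
have omal : 0 < 1 - al by rewrite subr_gt0.
have omx : 0 < 1 - x by rewrite subr_gt0.
set c := (1 - al)^-1; set M := Num.max x b.
set C := 2 * x * e0 / (1 - al); set D := (2 * x * tp + eps) / ((1 - x) * (1 - al)).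
have c_ge0 : 0 <= c by rewrite invr_ge0 ltW.
have C_ge0 : 0 <= C by rewrite !mulr_ge0.
have D_ge0 : 0 <= D by rewrite divr_ge0 ?addr_ge0 ?mulr_ge0 // ltW.
have D_fix : x * D + (2 * x * tp + eps) * c = D.
  by rewrite /D /c; field; rewrite !gt_eqF.
have Cb k : 2 * x * (b ^+ k * e0) * c = C * b ^+ k by rewrite /C /c; ring.
have M_ge0 : 0 <= M by rewrite le_max x_ge0.
have xkM k : x * (k%:R * M ^+ k.-1) <= k%:R * M ^+ k.
  case: k => [|k] /=; first by rewrite !mul0r mulr0.
  by rewrite exprS mulrCA ler_wpM2l // ler_wpM2r ?exprn_ge0 // le_max lexx.
have bM k : b ^+ k <= M ^+ k by rewrite lerXn2r // ?nnegrE // le_max lexx orbT.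
rewrite -/c in a0_le a_step.
elim=> [|k IH]; first by rewrite expr0 mulr0 mul0r addr0 mul1r; lra.
have ek : (2 * x * e k + eps) * c <= (2 * x * (b ^+ k * e0 + tp) + eps) * c.
  by rewrite ler_wpM2r // lerD2r ler_wpM2l ?mulr_ge0.
have := ler_wpM2l x_ge0 IH; have := ler_wpM2l C_ge0 (xkM k); have := ler_wpM2l C_ge0 (bM k).
have := a_step k; have := Cb k.
rewrite exprS /= -addn1 natrD; lra.
Qed.

Lemma horizon_contraction (R : realType) (alpha dl : R) (N : nat) :
  0 < alpha < 1 -> 0 <= dl -> ln dl / ln alpha^-1 < N%:R -> alpha ^+ N * dl < 1.
Proof.
move=> /andP[alpha_gt0 alpha_lt1]; rewrite le_eqVlt => /predU1P[<-|dl_gt0 hln].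
  by rewrite mulr0.
have ai_gt1 : 1 < alpha^-1 by rewrite invf_gt1.
have : ln dl < ln (alpha^-1 ^+ N) by rewrite lnXn ?invr_gt0 // -mulr_natl -ltr_pdivrMr ?ln_gt0.
rewrite ltr_ln ?posrE ?exprn_gt0 ?invr_gt0 // => dl_lt.
have : alpha ^+ N * dl < alpha ^+ N * alpha^-1 ^+ N by rewrite ltr_pM2l ?exprn_gt0.
by rewrite -exprMn mulfV ?gt_eqF // expr1n.
Qed.
Theorem theorem1 (R : realType) (n : nat) (A : finType)
  (P : 'I_n -> A -> 'I_n -> R) (r : 'I_n -> A -> R) (alpha : R)
  (m H d : nat) (epsLA epsPE : R) (Phi : 'M[R]_(n, d)) (D : nat -> {set 'I_n})
  (a0 : A) (J : nat -> 'I_n -> R) (mu : nat -> {ffun 'I_n -> A})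
  (w : nat -> 'I_n -> R) :
  (* MDP *)
  (forall s a j, 0 <= P s a j) ->
  (forall s a, \sum_(j < n) P s a j = 1) ->
  (forall s a, 0 <= r s a <= 1) ->
  0 < alpha < 1 ->
  (* parameters *)
  (1 <= m)%N -> (1 <= H)%N -> 0 <= epsLA -> 0 <= epsPE ->
  (forall k, \rank (PhiD Phi (D k)) = d) ->
  (* the algorithm *)
  (forall k, vnorm (vsub (iter H (Tbell P r alpha a0) (J k))
                         (Tmu P r alpha (mu k.+1)
                            (iter H.-1 (Tbell P r alpha a0) (J k)))) <= epsLA) ->
  (forall k i, i \notin D k -> w k.+1 i = 0) ->
  (forall k, vnorm (w k.+1) <= epsPE) ->
  (forall k, J k.+1 = mxapp (LSproj Phi (D k))
      (vadd (iter m (Tmu P r alpha (mu k.+1))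
               (iter H.-1 (Tbell P r alpha a0) (J k))) (w k.+1))) ->
  (* delta_FV < oo and the horizon condition *)
  has_ubound (deltaFV_set Phi D) ->
  ln (deltaFV Phi D) / ln (alpha^-1) < (m + H - 1)%:R ->
  let dFV := deltaFV Phi D in
  let dapp := deltaapp P r alpha Phi D in
  let tau := (alpha ^+ m + alpha ^+ (m + H - 1)) / (1 - alpha) * dFV
             + dapp + dFV * epsPE in
  let beta := alpha ^+ (m + H - 1) * dFV in
  forall k : nat, (1 <= k)%N ->
    vnorm (vsub (Jmu P r alpha (mu k)) (Jstar P r alpha (mu 0%N))) <=
      alpha ^+ (k * H) / (1 - alpha)
      + 2 * alpha ^+ H * vnorm (vsub (Jmu P r alpha (mu 0%N)) (J 0%N)) / (1 - alpha)
          * k%:R * (Num.max (alpha ^+ H) beta) ^+ k.-1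
      + (2 * alpha ^+ H * (tau / (1 - beta)) + epsLA)
          / ((1 - alpha ^+ H) * (1 - alpha)).
Proof.
move=> P_ge0 P_sum1 r_range alpha_range _ H_ge1 epsLA_ge0 epsPE_ge0 _ greedy _ w_le
  J_next dFV_bounded horizon dFV dapp tau beta k _.
have [alpha_gt0 alpha_lt1] := andP alpha_range; have alpha_ge0 := ltW alpha_gt0.
have K_ge0 : 0 <= (1 - alpha)^-1 by rewrite invr_ge0 subr_ge0 ltW.
have Mk_le := mxnorm_LSproj_le_deltaFV dFV_bounded.
have app_le := LSproj_Jmu_error_le_deltaapp P_ge0 P_sum1 r_range alpha_range dFV_bounded.
have dFV_ge0 : 0 <= dFV := le_trans (mxnorm_ge0 _) (Mk_le 0%N).
have dapp_ge0 : 0 <= dapp := le_trans (vnorm_ge0 _) (app_le 0%N (mu 1%N)).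
have mH : (m + H - 1 = m + H.-1)%N by rewrite -subn1 addnBA.
have beta_range : 0 <= beta < 1.
  by rewrite /beta mulr_ge0 ?exprn_ge0 //= horizon_contraction.
have tau_ge0 : 0 <= tau.
  by rewrite /tau ?(addr_ge0, mulr_ge0, exprn_ge0).
pose e j := vnorm (vsub (Jmu P r alpha (mu j)) (J j)).
have e_step j : e j.+1 <= beta * e j + tau.
  rewrite /e J_next; apply: le_trans (projected_evaluation_error P_ge0 P_sum1 r_range
    alpha_range a0 m H (J j) (mu j) (Mk_le j) (w_le j) (app_le j (mu j.+1))) _.
  have : 0 <= alpha ^+ (m + H.-1) / (1 - alpha) * dFV.
    by rewrite !mulr_ge0 ?exprn_ge0.
  rewrite /beta /tau /dFV /dapp mH mulrDl mulrDl; lra.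
pose a j := vnorm (vsub (Jmu P r alpha (mu j)) (Jstar P r alpha (mu 0%N))).
rewrite mulnC exprM; apply: (@perturbed_recurrence_le _ alpha _ beta _ _ epsLA a e
  _ _ _ _ _ _ (affine_recurrence_le beta_range tau_ge0 e_step)) => //.
- by rewrite exprn_ge0 //= expr_lt1.
- by case/andP: beta_range.
- exact: vnorm_ge0.
- by case/andP: beta_range => _ ?; rewrite divr_ge0 // subr_ge0 ltW.
- by apply: vnorm_sub_range => // i; [apply: Jmu_range | apply: Jstar_range].
- by move=> j; apply: lookahead_policy_error.
Qed.
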